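(* Let $n\ge 2$ be an integer and let $x_1,\dots,x_n>0$ satisfy $\frac1n\sum_{i=1}^n\frac1{x_i}=1$. Then \[ \frac1n\sum_{i=1}^n x_i\le\prod_{i=1}^n x_i, \] with equality if and only if $x_1=\cdots=x_n=1$ when $n\ge3$; when $n=2$, equality holds for all such $x_1,x_2$. *)

From mathcomp Require Import all_boot all_order all_algebra.

From mathcomp Require Import all_boot all_order all_algebra.
From mathcomp Require Import ring lra.
Import Order.TTheory GRing.Theory Num.Theory.
Set Implicit Arguments.
Unset Strict Implicit.
Unset Printing Implicit Defensive.

Local Open Scope ring_scope.

(* With y_i := 1 / x_i the y_i have mean 1, and the inequality becomes
   e_{n-1}(y) = (prod y)(sum 1/y) <= n mean(y)^(n-1), a case of Maclaurin's
   inequality.  Induction on n: appending t to a sample y' of mean a gives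
   e(y) = t e(y') + prod y' <= t n a^(n-1) + a^n by induction and AM-GM, and the
   tangent-line inequality n a^(n-1) b - (n-1) a^n <= b^n at the new mean b
   bounds this by (n+1) b^n.  Tracking the equality cases with [?= iff] shows
   that equality holds exactly when n <= 2 or all y_i are equal. *)

Lemma forall2_eq_ord_recr (T : eqType) n (y : 'I_n.+2 -> T)
    (y' := fun i : 'I_n.+1 => y (widen_ord (leqnSn _) i)) :
  [forall i, forall j, y i == y j] =
  [forall i, forall j, y' i == y' j] && (y ord_max == y' ord0).
Proof.
apply/idP/andP => [/forallP yc | [/forallP y'c /eqP yn]].
  by split; [apply/forallP => i; apply/forallP => j |]; apply: (forallP (yc _)).
have yE i : y i = y' ord0.
  have [j ->|->] := unliftP ord_max i; last exact: yn.
  have -> : lift ord_max j = widen_ord (leqnSn _) j by apply: val_inj; apply: lift_max.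
  exact/eqP/(forallP (y'c j)).
by apply/forallP => i; apply/forallP => j; rewrite !yE.
Qed.

Section Maclaurin.
Variable R : realFieldType.

Definition mean {n} (y : 'I_n -> R) : R := (\sum_i y i) / n%:R.

Lemma mean_constant n (y : 'I_n.+1 -> R) :
  [forall i, forall j, y i == y j] -> forall i, mean y = y i.
Proof.
move=> /forallP yc i; rewrite /mean (eq_bigr (fun=> y i)) => [|j _].
  by rewrite sumr_const card_ord -[_ *+ _]mulr_natr mulfK ?pnatr_eq0.
exact/eqP/(forallP (yc j)).
Qed.

Lemma leif_AGM_ord n (y : 'I_n -> R) : (forall i, 0 <= y i) ->
  \prod_i y i <= mean y ^+ n ?= iff [forall i, forall j, y i == y j].
Proof.
move=> y_ge0; have := @leif_AGM R _ predT y (fun i _ => y_ge0 i).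
by rewrite cardT size_enum_ord.
Qed.

Lemma subrXX_mul_subr_gt0 k (a b : R) : 0 <= a -> 0 <= b -> a != b ->
  0 < (a ^+ k.+1 - b ^+ k.+1) * (a - b).
Proof.
move=> a_ge0 b_ge0; case: (ltgtP a b) => // [ab|ba] _.
  by rewrite nmulr_rgt0 ?subr_lt0 ?ltrXn2r.
by rewrite pmulr_rgt0 ?subr_gt0 ?ltrXn2r.
Qed.

Lemma ltr_tangent_exprS k (a b : R) : 0 <= a -> 0 <= b -> a != b ->
  k.+2%:R * a ^+ k.+1 * b < b ^+ k.+2 + k.+1%:R * a ^+ k.+2.
Proof.
move=> a_ge0 b_ge0 ab; elim: k => [|k IH].
  by have := subrXX_mul_subr_gt0 0 a_ge0 b_ge0 ab; rewrite !expr1 expr2; nra.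
have := subrXX_mul_subr_gt0 k.+1 a_ge0 b_ge0 ab.
have := ler_wpM2l a_ge0 (ltW IH).
rewrite !exprS -[k.+3%:R]natr1 -[k.+2%:R]natr1; nra.
Qed.

Lemma leif_tangent_exprS k (a b : R) : 0 <= a -> 0 <= b ->
  k.+1%:R * a ^+ k * b <= b ^+ k.+1 + k%:R * a ^+ k.+1 ?= iff (k == 0)%N || (a == b).
Proof.
move=> a_ge0 b_ge0; apply/leifP; case: ifPn => [/orP[/eqP-> | /eqP<-] |].
- by rewrite expr0 expr1 mulr1 mul1r mul0r addr0.
- by rewrite -mulrA -exprSr -[k.+1%:R]natr1 mulrDl mul1r addrC.
- by rewrite negb_or; case: k => // k /andP[_]; apply: ltr_tangent_exprS.
Qed.

Lemma leif_Maclaurin_step n (a t : R) : 0 <= a -> 0 < t ->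
  t * (n.+1%:R * a ^+ n) + a ^+ n.+1
    <= n.+2%:R * ((n.+1%:R * a + t) / n.+2%:R) ^+ n.+1 ?= iff (n == 0)%N || (t == a).
Proof.
move=> a_ge0 t_gt0; set b := (_ / _).
have b_ge0 : 0 <= b by rewrite divr_ge0 // addr_ge0 ?mulr_ge0 // ltW.
have tE : t = n.+2%:R * b - n.+1%:R * a.
  by rewrite /b mulrC divfK ?pnatr_eq0 // addrC addKr.
have -> : (t == a) = (a == b).
  rewrite tE subr_eq -[X in X + _]mul1r -mulrDl nat1r.
  by rewrite (inj_eq (mulfI _)) ?pnatr_eq0 // eq_sym.
have -> : t * (n.+1%:R * a ^+ n) + a ^+ n.+1
          = n.+2%:R * (n.+1%:R * a ^+ n * b - n%:R * a ^+ n.+1).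
  by rewrite tE exprS -[n.+2%:R]natr1 -[n.+1%:R]natr1; ring.
by rewrite (mono_leif (ler_pM2l (ltr0Sn _ _))) leifBLR; apply: leif_tangent_exprS.
Qed.

Lemma leif_prod_sumV n (y : 'I_n.+1 -> R) : (forall i, 0 < y i) ->
  (\prod_i y i) * (\sum_i (y i)^-1) <= n.+1%:R * mean y ^+ n
    ?= iff (n <= 1)%N || [forall i, forall j, y i == y j].
Proof.
elim: n y => [|n IH] y y_gt0.
  by rewrite !big_ord1 mulfV ?gt_eqF // expr0 mulr1; apply/leif_refl.
set y' := fun i : 'I_n.+1 => y (widen_ord (leqnSn _) i); set t := y ord_max.
have y'_gt0 i : 0 < y' i := y_gt0 _.
have t_gt0 : 0 < t := y_gt0 _.
have meanE : mean y = (n.+1%:R * mean y' + t) / n.+2%:R.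
  by rewrite /mean big_ord_recr /= [n.+1%:R * _]mulrC divfK ?pnatr_eq0.
have IHt := IH y' y'_gt0; rewrite -(mono_leif (ler_pM2l t_gt0)) in IHt.
have a_ge0 : 0 <= mean y' by rewrite divr_ge0 // sumr_ge0 // => i _; apply: ltW.
have AGM := leif_AGM_ord (fun i => ltW (y'_gt0 i)).
have -> : \prod_i y i * \sum_i (y i)^-1
          = t * (\prod_i y' i * \sum_i (y' i)^-1) + \prod_i y' i.
  rewrite (big_ord_recr n.+1) (big_ord_recr n.+1) /=.
  by rewrite mulrDr mulfK ?gt_eqF // mulrAC mulrC.
rewrite meanE; congr (_ <= _ ?= iff _):
  (leif_trans (leifD IHt AGM) (leif_Maclaurin_step n a_ge0 t_gt0)).
rewrite [(_ || _) && _]andb_idl => [|->]; last by rewrite orbT.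
have [n0|n_gt0] := posnP n.
  by subst n; rewrite /= andbT; apply/forallP => i; apply/forallP => j; rewrite !ord1.
rewrite ltnNge n_gt0 /= forall2_eq_ord_recr.
by apply/andb_id2l => y'_const; rewrite (mean_constant y'_const ord0).
Qed.

End Maclaurin.

Theorem lemma4p4 (R : realFieldType) (n : nat) (hn : (2 <= n)%N)
  (x : 'I_n -> R) (hx : forall i, 0 < x i)
  (hsum : n%:R^-1 * (\sum_(i < n) (x i)^-1) = 1) :
  n%:R^-1 * (\sum_(i < n) x i) <= \prod_(i < n) x i /\
  ((3 <= n)%N ->
     (n%:R^-1 * (\sum_(i < n) x i) = \prod_(i < n) x i <-> forall i, x i = 1)) /\
  (n = 2%N -> n%:R^-1 * (\sum_(i < n) x i) = \prod_(i < n) x i).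
Proof.
case: n hn x hx hsum => // m _ x x_gt0 hsum.
pose y i := (x i)^-1.
have y_gt0 i : 0 < y i by rewrite invr_gt0.
have mean_y : mean y = 1 by rewrite /mean mulrC.
have Px_gt0 : 0 < \prod_i x i by apply: prodr_gt0.
have c_gt0 : 0 < \prod_i x i / m.+1%:R by rewrite divr_gt0.
have L : m.+1%:R^-1 * \sum_i x i <= \prod_i x i
           ?= iff (m <= 1)%N || [forall i, forall j, y i == y j].
  have := leif_prod_sumV y_gt0; rewrite -(mono_leif (ler_pM2l c_gt0)).
  have -> : \sum_i (y i)^-1 = \sum_i x i by apply: eq_bigr => i _; apply: invrK.
  rewrite mean_y expr1n mulr1 prodfV.
  by congr (_ <= _ ?= iff _); field; rewrite ?nat1r ?pnatr_eq0 ?(gt_eqF Px_gt0).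
split; first exact: L.1.
split=> [m_gt1 | m1]; last by apply/eqP; rewrite L.2; apply/orP; left; case: m1 => ->.
rewrite (rwP eqP) L.2 leqNgt -ltnS m_gt1 /=; split=> [y_const i | x1].
  by apply/eqP; rewrite -invr_eq1 -/(y i) -(mean_constant y_const) mean_y.
by apply/forallP => i; apply/forallP => j; rewrite /y !x1.
Qed.
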